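(* Let $\Lambda>0$, $r>0$, $\delta=1/\Lambda$, let $\mathcal{L}$ be a bounded measurable Lagrangian with $\mathcal{L}\ge0$ and $M=\sup\mathcal{L}$, and assume $M r^{D-1}/\Lambda\le 1$. Then for every cylindrical $F=f(g_1(\phi),\dots,g_k(\phi))$ (with $f$ real) one has $$\left|\frac{\int F[\phi]F_\Theta[\phi]\left(e^{-\int_{B^+_{2\delta}(0,r)\cup B^-_{2\delta}(0,r)}\mathcal{L}(\phi_\Lambda)}-e^{-\int_{B(0,r)}\mathcal{L}(\phi_\Lambda)}\right)d\mu[\phi]}{\int e^{-\int_{B(0,r)}\mathcal{L}(\phi_\Lambda)}\,d\mu[\phi]}\right|\le c\,\|f\|_{L^\infty}^2\,\frac{M r^{D-1}}{\Lambda},$$ where $c$ depends only on $D$.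
   Context: Fix integers $D,K\ge1$. $\Phi'$ is the space of $\mathbb{R}^K$-valued (tempered) distributions on $\mathbb{R}^D$. $\mu$ is the centered Gaussian measure on $\Phi'$ with covariance $C(f,g)=(2\pi)^{-D}\int\frac{\overline{\widehat f(p)}\cdot\widehat g(p)}{p^2+1}dp$. $\sigma$ is a smooth, nonnegative, rotationally invariant function supported in $B(0,1)$ with $\int\sigma=1$; $\sigma_\Lambda(x)=\Lambda^D\sigma(\Lambda x)$, $\phi_\Lambda=\phi*\sigma_\Lambda$. For bounded measurable $\mathcal{L}:(\mathbb{R}^K)^{l+1}\to\mathbb{R}$, $\mathcal{L}(\phi_\Lambda)(x):=\mathcal{L}(\phi_\Lambda(x),\nabla^2\phi_\Lambda(x),\dots,(\nabla^2)^l\phi_\Lambda(x))$, and $\int_A\mathcal{L}(\phi_\Lambda)$ means $\int_A\mathcal{L}(\phi_\Lambda)(x)dx$. Cylindrical function: $F[\phi]=f(g_1(\phi),\dots,g_k(\phi))$, $g_i\in C_0^\infty(\mathbb{R}^D;\mathbb{R}^K)$, $f$ bounded continuous. $\Theta(x_1,\dots,x_D)=(x_1,\dots,-x_D)$, $(\Theta\phi)(g)=\phi(g\circ\Theta)$, $F_\Theta[\phi]=F[\Theta\phi]$. $\Pi^\pm_\delta=\{\pm x_D>\delta\}$, $B^\pm_\delta(0,r)=B(0,r)\cap\Pi^\pm_\delta$. *)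

From HB Require Import structures.
From mathcomp Require Import all_boot all_order all_algebra.
From mathcomp Require Import all_classical all_reals all_analysis.

Set Implicit Arguments.
Unset Strict Implicit.
Unset Printing Implicit Defensive.

Import Order.TTheory GRing.Theory Num.Theory.
Import numFieldNormedType.Exports.
Local Open Scope classical_set_scope.
Local Open Scope ring_scope.

Section Defs.
Context {R : realType}.

Definition tdot (D : nat) (x y : D.-tuple R) : R :=
  \sum_(i < D) tnth x i * tnth y i.
Definition tnorm (D : nat) (x : D.-tuple R) : R := Num.sqrt (tdot x x).
Definition tsub (D : nat) (x y : D.-tuple R) : D.-tuple R :=
  [tuple tnth x i - tnth y i | i < D].
Definition tscale (D : nat) (a : R) (x : D.-tuple R) : D.-tuple R :=
  [tuple a * tnth x i | i < D].
Definition tshift (D : nat) (x : D.-tuple R) (i : 'I_D) (t : R) : D.-tuple R :=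
  [tuple if j == i then tnth x j + t else tnth x j | j < D].
Definition lastc (D : nat) (x : D.-tuple R) : R := nth 0 x D.-1.
Definition Theta (D : nat) (x : D.-tuple R) : D.-tuple R :=
  [tuple if val j == D.-1 then - tnth x j else tnth x j | j < D].

Definition tball0 (D : nat) (r : R) : set (D.-tuple R) := [set x | tnorm x < r].
Definition ballP (D : nat) (delta r : R) : set (D.-tuple R) :=
  @tball0 D r `&` [set x | delta < lastc x].
Definition ballM (D : nat) (delta r : R) : set (D.-tuple R) :=
  @tball0 D r `&` [set x | lastc x < - delta].

(* Lebesgue measure on R^D: the measure on the (Borel = product) sigma-algebra
   of D.-tuple R giving each box its volume (this characterizes it uniquely) *)
Definition is_lebesgue (D : nat) (leb : {measure set (D.-tuple R) -> \bar R}) :=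
  forall a b : D.-tuple R, (forall i, tnth a i <= tnth b i) ->
    leb [set x | forall i, tnth a i <= tnth x i <= tnth b i] =
    (\prod_(i < D) (tnth b i - tnth a i))%:E.

Definition partial (D : nat) (i : 'I_D) (h : D.-tuple R -> R) : D.-tuple R -> R :=
  fun x => derive1 (fun t : R => h (tshift x i t)) 0.
Definition iter_partial (D : nat) (l : seq 'I_D) (h : D.-tuple R -> R) :=
  foldr (@partial D) h l.
Definition tcontinuous (D : nat) (h : D.-tuple R -> R) :=
  forall x (e : R), 0 < e -> exists2 d : R, 0 < d &
    forall y, tnorm (tsub y x) < d -> `|h y - h x| < e.
Definition smooth (D : nat) (h : D.-tuple R -> R) :=
  forall l : seq 'I_D, tcontinuous (iter_partial l h) /\
    forall i x, derivable (fun t : R => iter_partial l h (tshift x i t)) 0 1.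
Definition compact_support (D : nat) (h : D.-tuple R -> R) :=
  exists rho : R, forall x, rho <= tnorm x -> h x = 0.
Definition lap (D : nat) (h : D.-tuple R -> R) : D.-tuple R -> R :=
  fun x => \sum_(i < D) partial i (partial i h) x.

Definition testfun (D K : nat) := 'I_K -> D.-tuple R -> R.
Definition is_test (D K : nat) (g : testfun D K) :=
  forall k, smooth (g k) /\ compact_support (g k).

(* ---------- Tempered distributions, seen through their values on
   C_0^oo (dense in Schwartz space): linear, with a Schwartz-seminorm bound ---- *)
Definition is_tempered (D K : nat) (phi : testfun D K -> R) :=
  (forall (a b : R) (g1 g2 : testfun D K), is_test g1 -> is_test g2 ->
     phi (fun k x => a * g1 k x + b * g2 k x) = a * phi g1 + b * phi g2) /\
  exists (C : R) (N : nat), forall g, is_test g -> forall s : R,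
    (forall k (l : seq 'I_D) x, (size l <= N)%N ->
       (1 + tnorm x ^+ 2) ^+ N * `|iter_partial l (g k) x| <= s) ->
    `|phi g| <= C * s.

Definition Phi' (D K : nat) := {phi : testfun D K -> R | is_tempered phi}.

Lemma tempered0 (D K : nat) : is_tempered (fun _ : testfun D K => 0 : R).
Proof.
split=> [a b g1 g2 _ _|]; first by rewrite mulr0 mulr0 addr0.
by exists 0, 0%N => g _ s _; rewrite normr0 mul0r.
Qed.

Definition phi0 (D K : nat) : Phi' D K := exist _ _ (@tempered0 D K).

HB.instance Definition _ (D K : nat) := gen_eqMixin (Phi' D K).
HB.instance Definition _ (D K : nat) := gen_choiceMixin (Phi' D K).
HB.instance Definition _ (D K : nat) := isPointed.Build (Phi' D K) (@phi0 D K).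

Definition cylinders (D K : nat) : set (set (Phi' D K)) :=
  [set E | exists (g : testfun D K) (A : set R), is_test g /\ measurable A /\
     E = (fun phi : Phi' D K => sval phi g) @^-1` A].

Definition PhiM (D K : nat) : measurableType _ := g_sigma_algebraType (@cylinders D K).

Definition ThetaPhi (D K : nat) (phi : Phi' D K) (g : testfun D K) : R :=
  sval phi (fun k x => g k (Theta x)).

(* ---------- Covariance C(g,g) = (2 pi)^{-D} int |hat g(p)|^2/(p^2+1) dp,
   |hat g(p)|^2 = sum_k ((int g_k cos(p.x))^2 + (int g_k sin(p.x))^2) ---------- *)
Definition fourier_cos (D : nat) (leb : {measure set (D.-tuple R) -> \bar R})
  (h : D.-tuple R -> R) (p : D.-tuple R) : R :=
  Rintegral leb setT (fun x => h x * cos (tdot p x)).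
Definition fourier_sin (D : nat) (leb : {measure set (D.-tuple R) -> \bar R})
  (h : D.-tuple R -> R) (p : D.-tuple R) : R :=
  Rintegral leb setT (fun x => h x * sin (tdot p x)).
Definition covC (D K : nat) (leb : {measure set (D.-tuple R) -> \bar R})
  (g : testfun D K) : R :=
  (pi *+ 2) ^- D * Rintegral leb setT (fun p =>
    (\sum_(k < K) (fourier_cos leb (g k) p ^+ 2 + fourier_sin leb (g k) p ^+ 2))
    / (tnorm p ^+ 2 + 1)).

(* mu is the centered Gaussian measure with covC C:
   characteristic functional int e^{i phi(g)} dmu = e^{-C(g,g)/2} *)
Definition is_gaussian (D K : nat) (leb : {measure set (D.-tuple R) -> \bar R})
  (mu : probability (PhiM D K) R) :=
  forall g : testfun D K, is_test g ->
    (\int[mu]_phi (cos (sval phi g))%:E = (expR (- covC leb g / 2))%:E)%E /\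
    (\int[mu]_phi (sin (sval phi g))%:E = 0)%E.

Definition sigmaL (D : nat) (sigma : D.-tuple R -> R) (Lam : R) (x : D.-tuple R) : R :=
  Lam ^+ D * sigma (tscale Lam x).
(* k-th component of phi_Lambda = phi * sigma_Lambda at x *)
Definition phiLam (D K : nat) (sigma : D.-tuple R -> R) (Lam : R)
  (phi : Phi' D K) (k : 'I_K) (x : D.-tuple R) : R :=
  sval phi (fun k' y => if k' == k then sigmaL sigma Lam (tsub x y) else 0).
Definition LagField (D K l : nat) (Lag : l.+1.-tuple (K.-tuple R) -> R)
  (sigma : D.-tuple R -> R) (Lam : R) (phi : Phi' D K) (x : D.-tuple R) : R :=
  Lag [tuple [tuple iter j (@lap D) (phiLam sigma Lam phi k) x | k < K] | j < l.+1].

End Defs.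

From HB Require Import structures.
From mathcomp Require Import all_boot all_order all_algebra.
From mathcomp Require Import all_classical all_reals all_analysis.
From mathcomp Require Import lra ring.
Import Order.TTheory GRing.Theory Num.Theory.
Import numFieldNormedType.Exports.
Local Open Scope classical_set_scope.
Local Open Scope ring_scope.

(* Removing the slab {|x_D| <= 2 delta} from B(0,r) only removes a set of
   volume at most 4 delta (2r)^(D-1), on which 0 <= L <= M; hence the two
   Boltzmann factors differ at most by the factor exp(M vol) - 1, which is
   O(M r^(D-1) / Lambda) once this quantity is bounded.  Dividing by the
   partition function then only requires |F F_Theta| <= |f|_oo^2.
   The Lagrangian field is not assumed measurable, so the integral estimates
   work directly with the integral of a nonnegative function as a supremum
   over simple functions. *)

Section nonneg_integral.
Context {d} {T : measurableType d} {R : realType} (mu : {measure set T -> \bar R}).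
Import HBNNSimple.

Lemma ge0_integral_setS (A B : set T) (f : T -> R) :
  (forall x, 0 <= f x) -> A `<=` B ->
  (\int[mu]_(x in A) (f x)%:E <= \int[mu]_(x in B) (f x)%:E)%E.
Proof.
move=> f0 AB; rewrite !ge0_integralE; try by move=> x _; rewrite lee_fin.
apply: ge_ereal_sup => _ [h hle <-]; apply: ereal_sup_ubound; exists h => // x.
apply: le_trans (hle x) _; rewrite /patch; case: ifPn => xA.
  by rewrite ifT // inE; apply: AB; rewrite -inE.
by case: ifP => _ //; rewrite lee_fin.
Qed.

Lemma ge0_integral_le (A : set T) (f g : T -> R) :
  (forall x, 0 <= f x) -> (forall x, f x <= g x) ->
  (\int[mu]_(x in A) (f x)%:E <= \int[mu]_(x in A) (g x)%:E)%E.
Proof.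
move=> f0 fg; have g0 x : 0 <= g x by apply: le_trans (fg x).
rewrite !ge0_integralE; try by move=> x _; rewrite lee_fin.
apply: ge_ereal_sup => _ [h hle <-]; apply: ereal_sup_ubound; exists h => // x.
apply: le_trans (hle x) _; rewrite /patch; case: ifPn => // _.
by rewrite lee_fin.
Qed.

(* A simple function below f on B splits into its parts off Q (below f on A)
   and on Q (below M). *)
Lemma ge0_integral_setD_le (A B Q : set T) (f : T -> R) (M : R) :
  measurable Q -> (forall x, 0 <= f x) -> (forall x, f x <= M) ->
  B `\` A `<=` Q ->
  (\int[mu]_(x in B) (f x)%:E <= \int[mu]_(x in A) (f x)%:E + M%:E * mu Q)%E.
Proof.
move=> mQ f0 fM BAQ; have M0 : 0 <= M by apply: le_trans (fM point).
rewrite (@ge0_integralE _ _ _ _ B); last by move=> x _; rewrite lee_fin.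
apply: ge_ereal_sup => _ [h hle <-].
have hM x : h x <= M.
  have := hle x; rewrite /patch; case: ifP => _; rewrite lee_fin => hx.
    exact: le_trans hx (fM x).
  exact: le_trans hx M0.
pose hQ' := mul_nnsfun h (indic_nnsfun R (measurableC mQ)).
pose hQ := mul_nnsfun h (indic_nnsfun R mQ).
rewrite (@eq_sintegral _ _ _ mu (hQ' \+ hQ)%R); last first.
  move=> x /=; rewrite !measurable_realfun.mindicE in_setC.
  by case: (x \in Q); rewrite /= ?mulr0 ?mulr1 ?addr0 ?add0r.
rewrite sintegralD; apply: leeD.
  rewrite ge0_integralE; last by move=> x _; rewrite lee_fin.
  apply: ereal_sup_ubound; exists hQ' => // x /=.
  rewrite measurable_realfun.mindicE.
  case: (boolP (x \in ~` Q)) => xQ; last first.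
    by rewrite mulr0 /patch; case: ifP => _; rewrite lee_fin.
  rewrite mulr1; apply: le_trans (hle x) _; rewrite /patch.
  case: ifPn => xB //; last by case: ifP => _ //; rewrite lee_fin.
  rewrite ifT // inE; apply: contrapT => xA.
  by move: xQ; rewrite inE; apply; apply: BAQ; split => //; rewrite -inE.
apply: (@le_trans _ _ (sintegral mu (scale_nnsfun (indic_nnsfun R mQ) M0))).
  apply: le_sintegral => x /=; rewrite measurable_realfun.mindicE.
  exact: ler_wpM2r.
by rewrite /= sintegralrM sintegral_indic.
Qed.

Lemma ge0_integralZl_le (A : set T) (w : T -> R) (K : R) :
  0 < K -> (forall x, 0 <= w x) ->
  (\int[mu]_(x in A) (K * w x)%:E <= K%:E * \int[mu]_(x in A) (w x)%:E)%E.
Proof.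
move=> K0 w0; rewrite !ge0_integralE; last 2 first.
- by move=> x _; rewrite lee_fin.
- by move=> x _; rewrite lee_fin mulr_ge0 // ltW.
apply: ge_ereal_sup => _ [h hle <-].
have Ki0 : 0 <= K^-1 by rewrite invr_ge0 ltW.
rewrite (@eq_sintegral _ _ _ mu (cst K \* (scale_nnsfun h Ki0))%R); last first.
  by move=> x /=; rewrite mulrA mulfV ?gt_eqF // mul1r.
rewrite sintegralrM lee_pmul2l ?lte_fin //.
apply: ereal_sup_ubound; exists (scale_nnsfun h Ki0) => // x /=.
have := hle x; rewrite /patch; case: ifP => _; rewrite !lee_fin => hx.
  by rewrite ler_pdivrMl.
exact: mulr_ge0_le0.
Qed.

End nonneg_integral.

Section dominated_ratio.
Context {d} {T : measurableType d} {R : realType} (mu : probability T R).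

Lemma Rintegral_norm_le (h w : T -> R) (K : R) : 0 <= K ->
  (forall x, 0 <= w x <= 1) -> (forall x, `|h x| <= K * w x) ->
  `|Rintegral mu setT h| <= K * Rintegral mu setT w.
Proof.
move=> K0 w01 hw; have w0 x : 0 <= w x by case/andP: (w01 x).
have [Keq0|Kneq0] := eqVneq K 0.
  rewrite Keq0 mul0r /Rintegral integral0_eq ?normr0 // => x _.
  by apply/eqP; rewrite eqe -normr_le0; have := hw x; rewrite Keq0 mul0r.
have Kpos : 0 < K by rewrite lt_def Kneq0.
set W := (\int[mu]_(x in setT) (w x)%:E)%E.
have W0 : (0 <= W)%E by apply: integral_ge0 => x _; rewrite lee_fin.
have Wfin : W \is a fin_num.
  rewrite ge0_fin_numE //; apply: (@le_lt_trans _ _ (\int[mu]_(x in setT) 1)%E).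
    by apply: ge0_integral_le => // x; case/andP: (w01 x).
  by rewrite integral_cst // mul1e (le_lt_trans (probability_le1 mu measurableT)) ?ltry.
have part_le (g : T -> R) : (forall x, 0 <= g x <= `|h x|) ->
    exists p : R, (\int[mu]_(x in setT) (g x)%:E)%E = p%:E /\ 0 <= p <= K * fine W.
  move=> g01; have g0 x : 0 <= g x by case/andP: (g01 x).
  have P0 : (0 <= \int[mu]_(x in setT) (g x)%:E)%E.
    by apply: integral_ge0 => x _; rewrite lee_fin.
  have PK : (\int[mu]_(x in setT) (g x)%:E <= K%:E * W)%E.
    apply: le_trans _ (ge0_integralZl_le mu setT w K Kpos w0).
    apply: ge0_integral_le => // x; case/andP: (g01 x) => _ gx.
    exact: le_trans gx (hw x).
  have Pfin : (\int[mu]_(x in setT) (g x)%:E)%E \is a fin_num.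
    by rewrite ge0_fin_numE //; apply: le_lt_trans PK _; rewrite -(fineK Wfin) -EFinM ltry.
  exists (fine (\int[mu]_(x in setT) (g x)%:E)%E); split; first by rewrite fineK.
  by rewrite fine_ge0 //= -lee_fin fineK // EFinM fineK.
rewrite /Rintegral integralE.
have -> : ((EFin \o h)^\+)%E = fun x => (Num.max (h x) 0)%:E.
  by apply/funext => x; rewrite funeposE /= EFin_max.
have -> : ((EFin \o h)^\-)%E = fun x => (Num.max (- h x) 0)%:E.
  by apply/funext => x; rewrite funenegE /= EFin_max.
have [p [-> /andP[p0 pK]]] := part_le (fun x => Num.max (h x) 0) (fun x =>
  ltac:(rewrite le_max lexx orbT /= ge_max normr_ge0 andbT; exact: ler_norm)).
have [n [-> /andP[n0 nK]]] := part_le (fun x => Num.max (- h x) 0) (fun x =>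
  ltac:(rewrite le_max lexx orbT /= ge_max normr_ge0 andbT -normrN; exact: ler_norm)).
rewrite /= ler_norml; apply/andP; split; lra.
Qed.

Lemma Rintegral_ratio_le (h w : T -> R) (K : R) : 0 <= K ->
  (forall x, 0 <= w x <= 1) -> (forall x, `|h x| <= K * w x) ->
  `|Rintegral mu setT h / Rintegral mu setT w| <= K.
Proof.
move=> K0 w01 hw; have Z0 : 0 <= Rintegral mu setT w.
  by apply: fine_ge0; apply: integral_ge0 => x _; rewrite lee_fin; case/andP: (w01 x).
have [->|Zneq0] := eqVneq (Rintegral mu setT w) 0; first by rewrite invr0 mulr0 normr0.
have Zpos : 0 < Rintegral mu setT w by rewrite lt_def Zneq0.
rewrite normrM normrV ?unitfE // (gtr0_norm Zpos) ler_pdivrMr //.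
exact: Rintegral_norm_le.
Qed.

End dominated_ratio.

Lemma expRN_Rintegral_setD_le {d} {T : measurableType d} {R : realType}
    (mu : {measure set T -> \bar R}) (A B Q : set T) (g : T -> R) (M P : R) :
  measurable Q -> (forall x, 0 <= g x) -> (forall x, g x <= M) ->
  A `<=` B -> B `\` A `<=` Q -> mu Q = P%:E ->
  0 <= expR (- Rintegral mu A g) - expR (- Rintegral mu B g)
    <= (expR (M * P) - 1) * expR (- Rintegral mu B g).
Proof.
move=> mQ g0 gM AB BAQ muQ.
have M0 : 0 <= M by apply: le_trans (gM point).
have P0 : 0 <= P by rewrite -lee_fin -muQ measure_ge0.
have IAB := ge0_integral_setS mu _ _ _ g0 AB.
have IBA := ge0_integral_setD_le mu A _ _ _ _ mQ g0 gM BAQ.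
rewrite muQ -EFinM in IBA.
have IA0 : (0 <= \int[mu]_(x in A) (g x)%:E)%E.
  by apply: integral_ge0 => x _; rewrite lee_fin.
rewrite /Rintegral.
move: IAB IBA IA0; case: (\int[mu]_(x in A) (g x)%:E)%E => [a| |] IAB IBA IA0 //.
  move: IAB IBA; case: (\int[mu]_(x in B) (g x)%:E)%E => [b| |] IAB IBA //=.
    rewrite !lee_fin in IAB IBA.
    have ebea : expR (- b) <= expR (- a) by rewrite ler_expR lerN2.
    have eaeb : expR (- a) <= expR (M * P) * expR (- b) by rewrite -expRD ler_expR; lra.
    by rewrite subr_ge0 ebea /= mulrBl mul1r lerB.
(* an infinite integral over A forces one over B, and [fine] sends both to 0 *)
have -> : (\int[mu]_(x in B) (g x)%:E)%E = +oo%E by apply/eqP; rewrite eq_le leey.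
rewrite /= subrr lexx /= mulr_ge0 ?expR_ge0 // subr_ge0.
by apply: le_trans (expR_ge1Dx _); rewrite lerDl mulr_ge0.
Qed.

Section slab.
Context {R : realType} {D : nat}.

Definition tbox (a b : D.-tuple R) : set (D.-tuple R) :=
  [set x | forall i, tnth a i <= tnth x i <= tnth b i].

Lemma measurable_tbox (a b : D.-tuple R) : measurable (tbox a b).
Proof.
have -> : tbox a b = \bigcap_(i in [set: 'I_D])
    ((fun x : D.-tuple R => tnth x i) @^-1` `[tnth a i, tnth b i]).
  apply/seteqP; split => x /=.
    by move=> xab i _ /=; rewrite in_itv /=; exact: xab.
  by move=> xab i; have := xab i I; rewrite /= in_itv.
apply: fin_bigcap_measurable; first exact: finite_finset.
by move=> i _; rewrite -[X in measurable X]setTI; exact: measurable_tnth.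
Qed.

Definition slab_corner (delta r : R) : D.-tuple R :=
  [tuple if val i == D.-1 then delta else r | i < D].

(* the box |x_D| <= delta, |x_i| <= r for i < D *)
Definition slab (delta r : R) : set (D.-tuple R) :=
  tbox (slab_corner (- delta) (- r)) (slab_corner delta r).

Lemma normr_tnth_le_tnorm (x : D.-tuple R) i : `|tnth x i| <= tnorm x.
Proof.
rewrite /tnorm /tdot -sqrtr_sqr; apply: ler_wsqrtr.
rewrite (bigD1 i) //= -expr2 lerDl.
by apply: sumr_ge0 => j _; rewrite -expr2 sqr_ge0.
Qed.

Lemma ball_setD_halfballs_sub_slab (delta r : R) :
  tball0 r `\` (ballP delta r `|` ballM delta r) `<=` slab delta r.
Proof.
move=> x [xB nA] i; rewrite !tnth_mktuple.
case: ifP => /eqP iD.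
  have lx : lastc x = tnth x i by rewrite /lastc (tnth_nth 0) iD.
  apply/andP; split; rewrite leNgt; apply/negP => h; apply: nA.
    by right; split => //; rewrite /= lx.
  by left; split => //; rewrite /= lx.
rewrite -ler_norml; apply: ltW; exact: le_lt_trans (normr_tnth_le_tnorm x i) xB.
Qed.

Lemma halfballs_sub_ball (delta r : R) :
  ballP delta r `|` ballM delta r `<=` @tball0 R D r.
Proof. by move=> x [[]|[]]. Qed.

Lemma lebesgue_slab (leb : {measure set (D.-tuple R) -> \bar R}) (delta r : R) :
  (0 < D)%N -> is_lebesgue leb -> 0 <= delta -> 0 <= r ->
  leb (slab delta r) = (2 * delta * (2 * r) ^+ D.-1)%:E.
Proof.
move=> D0 hleb delta0 r0; rewrite hleb; last first.
  by move=> i; rewrite !tnth_mktuple; case: ifP => _; lra.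
congr (_%:E); have D1D : (D.-1 < D)%N by rewrite ltn_predL.
pose iD : 'I_D := Ordinal D1D.
rewrite (bigD1 iD) //= !tnth_mktuple eqxx opprK -mulr2n mulr_natl.
congr (_ * _); rewrite (eq_bigr (fun=> 2 * r)) ?prodr_const ?cardC1 ?card_ord //.
move=> i iiD; rewrite !tnth_mktuple; case: ifP => [/eqP iD'|_]; last lra.
by move: iiD; rewrite (_ : i = iD) ?eqxx //; apply: val_inj.
Qed.

End slab.

Lemma ub_le_sup_range {T : Type} {R : realType} (f : T -> R) (B : R) :
  (forall v, `|f v| <= B) -> forall v, f v <= sup (range f).
Proof.
move=> fB v; apply: ub_le_sup; last by exists v.
by exists B => _ [w _ <-]; exact: le_trans (ler_norm _) (fB w).
Qed.

Lemma normr_mul_gap_le {R : realType} (a b x y S E : R) :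
  `|a| <= S -> `|b| <= S -> 0 <= x - y <= E * y ->
  `|a * b * (x - y)| <= S ^+ 2 * E * y.
Proof.
move=> aS bS /andP[gap0 gapE].
rewrite !normrM (ger0_norm gap0) -(mulrA (S ^+ 2)) expr2.
by apply: ler_pM; rewrite ?mulr_ge0 //; apply: ler_pM.
Qed.

Lemma expRM_sub1_le {R : realType} (a u : R) :
  0 <= a -> 0 <= u <= 1 -> expR (a * u) - 1 <= a * expR a * u.
Proof.
move=> a0 /andP[u0 u1]; have au0 : 0 <= a * u by rewrite mulr_ge0.
have h : expR (a * u) - 1 <= a * u * expR (a * u).
  (* from 1 - t <= exp (-t) *)
  have := ler_wpM2r (expR_ge0 (a * u)) (expR_ge1Dx (- (a * u))).
  rewrite -expRD addNr expR0 mulrDl mul1r mulNr; lra.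
apply: le_trans h _; rewrite [a * expR a * u]mulrAC; apply: (ler_wpM2l au0).
by rewrite ler_expR ler_piMr.
Qed.

Theorem mainTheorem5 (R : realType) (D : nat) : (0 < D)%N ->
  exists c : R,
  forall (K : nat) (leb : {measure set (D.-tuple R) -> \bar R})
    (mu : probability (PhiM D K) R) (sigma : D.-tuple R -> R)
    (Lam r : R) (l : nat) (Lag : l.+1.-tuple (K.-tuple R) -> R)
    (k : nat) (f : 'rV[R]_k -> R) (g : 'I_k -> testfun D K),
  (0 < K)%N ->
  is_lebesgue leb ->
  is_gaussian leb mu ->
  (* the mollifier sigma *)
  smooth sigma -> (forall x, 0 <= sigma x) ->
  (forall x y, tnorm x = tnorm y -> sigma x = sigma y) ->
  (forall x, 1 <= tnorm x -> sigma x = 0) ->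
  Rintegral leb setT sigma = 1 ->
  0 < Lam -> 0 < r ->
  (* the Lagrangian *)
  measurable_fun setT Lag -> (exists B : R, forall v, `|Lag v| <= B) ->
  (forall v, 0 <= Lag v) ->
  sup (range Lag) * r ^+ D.-1 / Lam <= 1 ->
  (* the cylindrical function F = f(g_1(phi),...,g_k(phi)) *)
  continuous f -> (exists B : R, forall v, `|f v| <= B) ->
  (forall i, is_test (g i)) ->
  let delta := Lam^-1 in
  let M := sup (range Lag) in
  let F := fun phi : PhiM D K => f (\row_i sval phi (g i)) in
  let FTheta := fun phi : PhiM D K => f (\row_i ThetaPhi phi (g i)) in
  let Boltz := fun (A : set (D.-tuple R)) (phi : PhiM D K) =>
    expR (- Rintegral leb A (LagField Lag sigma Lam phi)) in
  `| Rintegral mu setT (fun phi => F phi * FTheta phi *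
        (Boltz (ballP (2 * delta) r `|` ballM (2 * delta) r) phi
         - Boltz (tball0 r : set (D.-tuple R)) phi))
     / Rintegral mu setT (Boltz (tball0 r : set (D.-tuple R))) |
  <= c * sup (range (fun v => `|f v|)) ^+ 2 * (M * r ^+ D.-1 / Lam).
Proof.
move=> D0; exists (2 ^+ D.+1 * expR (2 ^+ D.+1)).
move=> K leb mu sigma Lam r l Lag k f g _ hleb _ _ _ _ _ _ Lam0 r0 _ [BL LagB]
  Lag0 small _ [Bf fB] _; cbv zeta.
set M := sup (range Lag) in small *; set S := sup (range (fun v => `|f v|)).
set u := M * r ^+ D.-1 / Lam in small *.
have LagM := ub_le_sup_range _ _ LagB.
have fS := ub_le_sup_range (fun v => `|f v|) Bf (fun w => ltac:(by rewrite normr_id)).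
have S0 : 0 <= S := le_trans (normr_ge0 _) (fS 0).
have M0 : 0 <= M := le_trans (Lag0 [tuple [tuple 0 | _ < K] | _ < l.+1]) (LagM _).
have u0 : 0 <= u by rewrite /u !mulr_ge0 ?exprn_ge0 ?invr_ge0 ?(ltW r0) ?(ltW Lam0).
pose P := 2 * (2 * Lam^-1) * (2 * r) ^+ D.-1.
have MP : M * P = 2 ^+ D.+1 * u.
  have -> : (2 : R) ^+ D.+1 = 2 * 2 * 2 ^+ D.-1.
    by rewrite -[in LHS](prednK D0) !exprS mulrA.
  by rewrite /u /P exprMn; ring.
have twodelta0 : 0 <= 2 * Lam^-1 by rewrite mulr_ge0 // invr_ge0 ltW.
have gap phi := expRN_Rintegral_setD_le leb
  (ballP (2 * Lam^-1) r `|` ballM (2 * Lam^-1) r) (tball0 r) _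
  (LagField Lag sigma Lam phi) M P (measurable_tbox _ _) (fun=> Lag0 _) (fun=> LagM _)
  (@halfballs_sub_ball _ _ _ r)
  (@ball_setD_halfballs_sub_slab _ _ (2 * Lam^-1) r)
  (lebesgue_slab leb _ _ D0 hleb twodelta0 (ltW r0)).
apply: le_trans (Rintegral_ratio_le mu _ _ (S ^+ 2 * (expR (M * P) - 1)) _ _ _) _.
- rewrite mulr_ge0 ?exprn_ge0 // subr_ge0.
  by rewrite -expR0 ler_expR MP mulr_ge0 ?exprn_ge0.
- move=> phi; rewrite expR_ge0 expR_le1 oppr_le0 /=.
  by apply: Rintegral_ge0 => x _; exact: Lag0.
- by move=> phi; apply: normr_mul_gap_le; rewrite ?fS ?gap.
rewrite [X in _ <= X](_ : _ = S ^+ 2 * (2 ^+ D.+1 * expR (2 ^+ D.+1) * u)); last by ring.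
by rewrite MP; apply: (ler_wpM2l (exprn_ge0 2 S0)); rewrite expRM_sub1_le ?exprn_ge0 ?u0.
Qed.
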